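(* The category $\mathcal{SG}$ of special groups is equivalent to the category $\mathcal{SMF}$ of special multifields, via the functors $G\mapsto M(G)=G\cup\{0\}$ and $F\mapsto F^\bullet=F\setminus\{0\}$.
   Context: A special group is $(G,-1,\equiv)$ with $G$ a group of exponent 2, $-1\in G$, $\equiv$ a relation on $G\times G$ satisfying: (SG0) equivalence relation; (SG1) $\langle a,b\rangle\equiv\langle b,a\rangle$; (SG2) $\langle a,-a\rangle\equiv\langle1,-1\rangle$ with $-a=(-1)a$; (SG3) $\langle a,b\rangle\equiv\langle c,d\rangle\Rightarrow ab=cd$; (SG4) $\langle a,b\rangle\equiv\langle c,d\rangle\Rightarrow\langle a,-c\rangle\equiv\langle -b,d\rangle$; (SG5) $\langle a,b\rangle\equiv\langle c,d\rangle\Rightarrow\langle ga,gb\rangle\equiv\langle gc,gd\rangle$; (SG6) the relation on $G^3$ given by $\langle a_1,a_2,a_3\rangle\equiv\langle b_1,b_2,b_3\rangle$ iff $\exists x,y,z$ with $\langle a_1,x\rangle\equiv\langle b_1,y\rangle$, $\langle a_2,a_3\rangle\equiv\langle x,z\rangle$, $\langle b_2,b_3\rangle\equiv\langle y,z\rangle$ is transitive. $D_G(a,b)=\{c:\exists d,\ \langle c,d\rangle\equiv\langle a,b\rangle\}$. Morphisms of special groups are group homomorphisms $f$ with $f(-1)=-1$ and $\langle a,b\rangle\equiv\langle c,d\rangle\Rightarrow\langle f(a),f(b)\rangle\equiv\langle f(c),f(d)\rangle$. $M(G)=G\cup\{0\}$ ($0$ new) with $a\cdot b=0$ if $a=0$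 or $b=0$, the product of $G$ otherwise; $-a=(-1)a$; $a+b=\{b\}$ if $a=0$, $\{a\}$ if $b=0$, $M(G)$ if $a=-b\ne0$, $D_G(a,b)$ otherwise. On morphisms, $M(f)$ extends $f$ by $0\mapsto0$. A multiring is a tuple $(R,+,\cdot,-,0,1)$ with $+:R\times R\to\mathcal P(R)\setminus\{\emptyset\}$ satisfying: $z\in x+y\Rightarrow x\in z+(-y)$ and $y\in(-x)+z$; $y\in0+x\iff y=x$; $+$ associative and commutative; $(R,\cdot,1)$ a commutative monoid; $a0=0$; $c\in a+b\Rightarrow cd\in ad+bd$; multifield: nonzero elements invertible; morphisms preserve $+$ (as $c\in a+b\Rightarrow f(c)\in f(a)+f(b)$), $-$, $0$, $\cdot$, $1$. A special multifield is a multifield $F$ such that, with $F^\bullet=F\setminus\{0\}$: (i) $a^2=1$ for $a\in F^\bullet$; (ii) $a+(-a)=F$ for $a\in F^\bullet$; (iii) $ab=cd$, $a\in c+d\Rightarrow c\in a+b$; (iv) $ab=cd=ef$, $a\in c+d$, $c\in e+f\Rightarrow a\in e+f$; (v) if there are $x,y,z\in F^\bullet$ with $ax=cy$, $a=xz$, $c=yz$, $a\in c+y$, $b\in x+z$, $d\in y+z$, then there are $t,v,w\in F^\bullet$ with $bt=cv$, $b=tw$, $c=vw$, $b\in c+v$, $a\in t+w$, $d\in v+w$ (all letters in $F^\bullet$). $F^\bullet$ is a special group with $\langle a,b\rangle\equiv\langle c,d\rangle$ iff $ab=cd$ and $a\in c+d$; morphisms are restricted. $\mathcal{SMF}$ has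 special multifields and multiring morphisms. *)

(* Data of a special group: carrier, product, unit 1, distinguished -1,
   and the binary-form isometry  sg_rel a b c d  :=  <a,b> == <c,d>. *)
Record SGdata := mkSG {
  sg_car : Type;
  sg_mul : sg_car -> sg_car -> sg_car;
  sg_one : sg_car;
  sg_m1  : sg_car;
  sg_rel : sg_car -> sg_car -> sg_car -> sg_car -> Prop
}.

Definition sg_neg (G : SGdata) (a : sg_car G) : sg_car G := sg_mul G (sg_m1 G) a.

(* <a1,a2,a3> == <b1,b2,b3> *)
Definition sg_rel3 (G : SGdata) (a1 a2 a3 b1 b2 b3 : sg_car G) : Prop :=
  exists x y z, sg_rel G a1 x b1 y /\ sg_rel G a2 a3 x z /\ sg_rel G b2 b3 y z.

Record is_special_group (G : SGdata) : Prop := {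
  sg_assoc : forall a b c, sg_mul G a (sg_mul G b c) = sg_mul G (sg_mul G a b) c;
  sg_mul1l : forall a, sg_mul G (sg_one G) a = a;
  sg_mul1r : forall a, sg_mul G a (sg_one G) = a;
  sg_exp2  : forall a, sg_mul G a a = sg_one G;
  sg_refl  : forall a b, sg_rel G a b a b;
  sg_sym   : forall a b c d, sg_rel G a b c d -> sg_rel G c d a b;
  sg_trans : forall a b c d e f, sg_rel G a b c d -> sg_rel G c d e f -> sg_rel G a b e f;
  sg_SG1 : forall a b, sg_rel G a b b a;
  sg_SG2 : forall a, sg_rel G a (sg_neg G a) (sg_one G) (sg_m1 G);
  sg_SG3 : forall a b c d, sg_rel G a b c d -> sg_mul G a b = sg_mul G c d;
  sg_SG4 : forall a b c d, sg_rel G a b c d -> sg_rel G a (sg_neg G c) (sg_neg G b) d;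
  sg_SG5 : forall a b c d g, sg_rel G a b c d ->
             sg_rel G (sg_mul G g a) (sg_mul G g b) (sg_mul G g c) (sg_mul G g d);
  sg_SG6 : forall a1 a2 a3 b1 b2 b3 c1 c2 c3,
             sg_rel3 G a1 a2 a3 b1 b2 b3 -> sg_rel3 G b1 b2 b3 c1 c2 c3 ->
             sg_rel3 G a1 a2 a3 c1 c2 c3
}.

Definition D_G (G : SGdata) (a b c : sg_car G) : Prop :=
  exists d, sg_rel G c d a b.

Definition is_sg_morphism (G H : SGdata) (f : sg_car G -> sg_car H) : Prop :=
  (forall a b, f (sg_mul G a b) = sg_mul H (f a) (f b)) /\
  f (sg_m1 G) = sg_m1 H /\
  (forall a b c d, sg_rel G a b c d -> sg_rel H (f a) (f b) (f c) (f d)).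

Definition sg_iso (G H : SGdata) (f : sg_car G -> sg_car H) : Prop :=
  is_sg_morphism G H f /\
  exists h : sg_car H -> sg_car G, is_sg_morphism H G h /\
    (forall x, h (f x) = x) /\ (forall y, f (h y) = y).

(* mr_add x y z  means  z \in x + y. *)
Record MRdata := mkMR {
  mr_car  : Type;
  mr_add  : mr_car -> mr_car -> mr_car -> Prop;
  mr_mul  : mr_car -> mr_car -> mr_car;
  mr_neg  : mr_car -> mr_car;
  mr_zero : mr_car;
  mr_one  : mr_car
}.

Record is_multiring (R : MRdata) : Prop := {
  mr_add_ne    : forall x y, exists z, mr_add R x y z;
  mr_add_rev   : forall x y z, mr_add R x y z ->
                   mr_add R z (mr_neg R y) x /\ mr_add R (mr_neg R x) z y;
  mr_add_0     : forall x y, mr_add R (mr_zero R) x y <-> y = x;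
  mr_add_assoc : forall x y z w,
                   (exists t, mr_add R x y t /\ mr_add R t z w) <->
                   (exists t, mr_add R y z t /\ mr_add R x t w);
  mr_add_comm  : forall x y z, mr_add R x y z <-> mr_add R y x z;
  mr_mul_assoc : forall a b c, mr_mul R a (mr_mul R b c) = mr_mul R (mr_mul R a b) c;
  mr_mul_comm  : forall a b, mr_mul R a b = mr_mul R b a;
  mr_mul_1     : forall a, mr_mul R (mr_one R) a = a;
  mr_mul_0     : forall a, mr_mul R a (mr_zero R) = mr_zero R;
  mr_distr     : forall a b c d, mr_add R a b c ->
                   mr_add R (mr_mul R a d) (mr_mul R b d) (mr_mul R c d)
}.

Record is_multifield (R : MRdata) : Prop := {
  mf_multiring : is_multiring R;
  mf_nontriv   : mr_one R <> mr_zero R;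
  mf_inv       : forall a, a <> mr_zero R -> exists b, mr_mul R a b = mr_one R
}.

Record is_special_multifield (F : MRdata) : Prop := {
  smf_multifield : is_multifield F;
  smf_i   : forall a, a <> mr_zero F -> mr_mul F a a = mr_one F;
  smf_ii  : forall a, a <> mr_zero F -> forall z, mr_add F a (mr_neg F a) z;
  smf_iii : forall a b c d, a <> mr_zero F -> b <> mr_zero F -> c <> mr_zero F ->
              d <> mr_zero F ->
              mr_mul F a b = mr_mul F c d -> mr_add F c d a -> mr_add F a b c;
  smf_iv  : forall a b c d e f, a <> mr_zero F -> b <> mr_zero F -> c <> mr_zero F ->
              d <> mr_zero F -> e <> mr_zero F -> f <> mr_zero F ->
              mr_mul F a b = mr_mul F c d -> mr_mul F c d = mr_mul F e f ->
              mr_add F c d a -> mr_add F e f c -> mr_add F e f a;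
  smf_v   : forall a b c d, a <> mr_zero F -> b <> mr_zero F -> c <> mr_zero F ->
              d <> mr_zero F ->
              (exists x y z, x <> mr_zero F /\ y <> mr_zero F /\ z <> mr_zero F /\
                 mr_mul F a x = mr_mul F c y /\ a = mr_mul F x z /\ c = mr_mul F y z /\
                 mr_add F c y a /\ mr_add F x z b /\ mr_add F y z d) ->
              (exists t v w, t <> mr_zero F /\ v <> mr_zero F /\ w <> mr_zero F /\
                 mr_mul F b t = mr_mul F c v /\ b = mr_mul F t w /\ c = mr_mul F v w /\
                 mr_add F c v b /\ mr_add F t w a /\ mr_add F v w d)
}.

Definition is_mr_morphism (R S : MRdata) (f : mr_car R -> mr_car S) : Prop :=
  (forall a b c, mr_add R a b c -> mr_add S (f a) (f b) (f c)) /\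
  (forall a, f (mr_neg R a) = mr_neg S (f a)) /\
  f (mr_zero R) = mr_zero S /\
  (forall a b, f (mr_mul R a b) = mr_mul S (f a) (f b)) /\
  f (mr_one R) = mr_one S.

Definition mr_iso (R S : MRdata) (f : mr_car R -> mr_car S) : Prop :=
  is_mr_morphism R S f /\
  exists h : mr_car S -> mr_car R, is_mr_morphism S R h /\
    (forall x, h (f x) = x) /\ (forall y, f (h y) = y).

(* The functor M : SG -> SMF  (0 is represented by None)               *)

Definition M_add (G : SGdata) (x y z : option (sg_car G)) : Prop :=
  match x, y with
  | None, _ => z = y
  | Some _, None => z = x
  | Some a, Some b =>
      a = sg_neg G b \/ (a <> sg_neg G b /\ exists c, z = Some c /\ D_G G a b c)
  end.

Definition M_mul (G : SGdata) (x y : option (sg_car G)) : option (sg_car G) :=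
  match x, y with
  | Some a, Some b => Some (sg_mul G a b)
  | _, _ => None
  end.

Definition M_neg (G : SGdata) (x : option (sg_car G)) : option (sg_car G) :=
  option_map (sg_neg G) x.

Definition MG (G : SGdata) : MRdata :=
  mkMR (option (sg_car G)) (M_add G) (M_mul G) (M_neg G) None (Some (sg_one G)).

Definition Mmap {A B : Type} (f : A -> B) : option A -> option B := option_map f.

Record nz_facts (R : MRdata) : Prop := {
  nz_one : mr_one R <> mr_zero R;
  nz_m1  : mr_neg R (mr_one R) <> mr_zero R;
  nz_mul : forall a b, a <> mr_zero R -> b <> mr_zero R -> mr_mul R a b <> mr_zero R
}.

Definition nzcar (R : MRdata) : Type := {x : mr_car R | x <> mr_zero R}.

Definition Fb (R : MRdata) (H : nz_facts R) : SGdata :=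
  mkSG (nzcar R)
    (fun a b => exist _ (mr_mul R (proj1_sig a) (proj1_sig b))
                  (nz_mul R H _ _ (proj2_sig a) (proj2_sig b)))
    (exist _ (mr_one R) (nz_one R H))
    (exist _ (mr_neg R (mr_one R)) (nz_m1 R H))
    (fun a b c d =>
       mr_mul R (proj1_sig a) (proj1_sig b) = mr_mul R (proj1_sig c) (proj1_sig d) /\
       mr_add R (proj1_sig c) (proj1_sig d) (proj1_sig a)).

Definition Fb_map (R S : MRdata) (g : mr_car R -> mr_car S)
  (Hnz : forall a, a <> mr_zero R -> g a <> mr_zero S) : nzcar R -> nzcar S :=
  fun a => exist _ (g (proj1_sig a)) (Hnz _ (proj2_sig a)).

Lemma Some_not_None {A : Type} (x : A) : Some x <> None.
Proof. discriminate. Qed.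

Definition eta (G : SGdata) (x : sg_car G) : nzcar (MG G) :=
  exist _ (Some x) (Some_not_None x).

Definition eps (F : MRdata) (x : option (nzcar F)) : mr_car F :=
  match x with
  | None => mr_zero F
  | Some a => proj1_sig a
  end.

Definition M_is_functor : Prop :=
  (forall G, is_special_group G -> is_special_multifield (MG G)) /\
  (forall G H (f : sg_car G -> sg_car H),
     is_special_group G -> is_special_group H -> is_sg_morphism G H f ->
     is_mr_morphism (MG G) (MG H) (Mmap f)) /\
  (forall (A : Type) (x : option A), Mmap (fun a => a) x = x) /\
  (forall (A B C : Type) (f : A -> B) (g : B -> C) x,
     Mmap (fun a => g (f a)) x = Mmap g (Mmap f x)).

Definition bullet_is_functor : Prop :=
  (forall F, is_special_multifield F ->
     nz_facts F /\ forall HF : nz_facts F, is_special_group (Fb F HF)) /\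
  (forall F K (g : mr_car F -> mr_car K),
     is_special_multifield F -> is_special_multifield K -> is_mr_morphism F K g ->
     (forall a, a <> mr_zero F -> g a <> mr_zero K) /\
     forall (HF : nz_facts F) (HK : nz_facts K) Hnz,
       is_sg_morphism (Fb F HF) (Fb K HK) (Fb_map F K g Hnz)) /\
  (forall F Hnz (x : nzcar F), Fb_map F F (fun a => a) Hnz x = x) /\
  (forall F K L (f : mr_car F -> mr_car K) (g : mr_car K -> mr_car L) Hf Hg Hgf
          (x : nzcar F),
     Fb_map F L (fun a => g (f a)) Hgf x = Fb_map K L g Hg (Fb_map F K f Hf x)).

Definition eta_natural_iso : Prop :=
  forall G, is_special_group G ->
    (forall HM : nz_facts (MG G), sg_iso G (Fb (MG G) HM) (eta G)) /\
    (forall H (f : sg_car G -> sg_car H), is_special_group H -> is_sg_morphism G H f ->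
       forall Hnz x,
         eta H (f x) = Fb_map (MG G) (MG H) (Mmap f) Hnz (eta G x)).

Definition eps_natural_iso : Prop :=
  forall F, is_special_multifield F ->
    (forall HF : nz_facts F, mr_iso (MG (Fb F HF)) F (eps F)) /\
    (forall K (g : mr_car F -> mr_car K), is_special_multifield K ->
       is_mr_morphism F K g ->
       forall Hnz (x : option (nzcar F)),
         g (eps F x) = eps K (Mmap (Fb_map F K g Hnz) x)).

From Stdlib Require Import Classical ClassicalEpsilon ProofIrrelevance.

(* In M(G) the sum a + b is the set D_G(a, b) of values of the form <a, b> (everything
   when b = -a), so each multiring axiom of M(G) is a special-group axiom in disguise:
   reversibility is SG4, distributivity is SG5, and associativity of the multivalued sum
   is the transitivity SG6 of ternary isometries.  Conversely, on F \ {0} the axioms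
   (i)-(iv) of a special multifield give SG0-SG5, and (v) says exactly that an isometry
   <a, b, ab> = <c, d, dc> survives exchanging a and b.  Scaling by the discriminant brings
   every ternary isometry into this shape, so ternary isometries are invariant under
   permutations of the entries on either side, and SG6 follows by gluing two consecutive
   isometries into one whose entries are then permuted back into place. *)

Lemma nz_ext (R : MRdata) (a b : nzcar R) : proj1_sig a = proj1_sig b -> a = b.
Proof. apply eq_sig_hprop. intros; apply proof_irrelevance. Qed.

Section ExponentTwo.
Variables (T : Type) (mul : T -> T -> T) (one : T).
Local Infix "**" := mul (at level 40, left associativity).
Hypothesis mulA : forall a b c, a ** (b ** c) = a ** b ** c.
Hypothesis mul1l : forall a, one ** a = a.
Hypothesis mul1r : forall a, a ** one = a.
Hypothesis mulxx : forall a, a ** a = one.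

Lemma exp2_mulK a b : a ** (a ** b) = b.
Proof. rewrite mulA, mulxx, mul1l; reflexivity. Qed.

Lemma exp2_mulKr a b : b ** a ** a = b.
Proof. rewrite <- mulA, mulxx, mul1r; reflexivity. Qed.

Lemma exp2_mulI a b c : a ** b = a ** c -> b = c.
Proof. intro E. rewrite <- (exp2_mulK a b), <- (exp2_mulK a c), E; reflexivity. Qed.

Lemma exp2_mulC a b : a ** b = b ** a.
Proof.
  apply (exp2_mulI (a ** b)).
  rewrite mulxx, mulA, <- (mulA a b b), mulxx, mul1r, mulxx; reflexivity.
Qed.

Lemma exp2_mulKK g a b : (g ** a) ** (g ** b) = a ** b.
Proof. rewrite (exp2_mulC g a), <- mulA, exp2_mulK; reflexivity. Qed.

End ExponentTwo.

Section Isometry.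
Variable G : SGdata.
Local Infix "**" := (sg_mul G) (at level 40, left associativity).
Local Notation rel := (sg_rel G).
Local Notation rel3 := (sg_rel3 G).
Hypothesis rel_sym : forall a b c d, rel a b c d -> rel c d a b.
Hypothesis rel_trans : forall a b c d e f, rel a b c d -> rel c d e f -> rel a b e f.
Hypothesis rel_swap : forall a b, rel a b b a.

Lemma rel_swapl a b c d : rel a b c d -> rel b a c d.
Proof. apply rel_trans, rel_swap. Qed.

Lemma rel_swapr a b c d : rel a b c d -> rel a b d c.
Proof. intro H. apply (rel_trans _ _ _ _ _ _ H), rel_swap. Qed.

Lemma rel3_sym a1 a2 a3 b1 b2 b3 : rel3 a1 a2 a3 b1 b2 b3 -> rel3 b1 b2 b3 a1 a2 a3.
Proof. intros (x & y & z & H1 & H2 & H3). exists y, x, z. auto. Qed.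

Lemma rel3_swap23l a1 a2 a3 c1 c2 c3 : rel3 a1 a2 a3 c1 c2 c3 -> rel3 a1 a3 a2 c1 c2 c3.
Proof. intros (x & y & z & H1 & H2 & H3). exists x, y, z. auto using rel_swapl. Qed.

Lemma rel3_swap23r a1 a2 a3 c1 c2 c3 : rel3 a1 a2 a3 c1 c2 c3 -> rel3 a1 a2 a3 c1 c3 c2.
Proof. intro H. apply rel3_sym, rel3_swap23l, rel3_sym, H. Qed.

Section TransitivityFromSwap.
Hypothesis mulA : forall a b c, a ** (b ** c) = a ** b ** c.
Hypothesis mul1l : forall a, sg_one G ** a = a.
Hypothesis mul1r : forall a, a ** sg_one G = a.
Hypothesis mulxx : forall a, a ** a = sg_one G.
Hypothesis rel_mul : forall a b c d, rel a b c d -> a ** b = c ** d.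
Hypothesis rel_scale : forall g a b c d, rel a b c d -> rel (g ** a) (g ** b) (g ** c) (g ** d).
Hypothesis rel3_swap12_prod : forall a b c d,
  rel3 a b (b ** a) c d (d ** c) -> rel3 b a (a ** b) c d (d ** c).

Local Notation mulK := (exp2_mulK _ _ _ mulA mul1l mulxx).
Local Notation mulKr := (exp2_mulKr _ _ _ mulA mul1r mulxx).
Local Notation mulKK := (exp2_mulKK _ _ _ mulA mul1l mul1r mulxx).
Local Notation mulC := (exp2_mulC _ _ _ mulA mul1l mul1r mulxx).

Lemma rel3_mul a1 a2 a3 b1 b2 b3 : rel3 a1 a2 a3 b1 b2 b3 -> a1 ** a2 ** a3 = b1 ** b2 ** b3.
Proof.
  intros (x & y & z & H1 & H2 & H3). apply rel_mul in H1, H2, H3.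
  rewrite <- !mulA, H2, H3, !mulA, H1; reflexivity.
Qed.

Lemma rel3_scale g a1 a2 a3 b1 b2 b3 : rel3 a1 a2 a3 b1 b2 b3 ->
  rel3 (g ** a1) (g ** a2) (g ** a3) (g ** b1) (g ** b2) (g ** b3).
Proof. intros (x & y & z & H1 & H2 & H3). exists (g ** x), (g ** y), (g ** z). auto. Qed.

Lemma rel3_swap12l a1 a2 a3 c1 c2 c3 : rel3 a1 a2 a3 c1 c2 c3 -> rel3 a2 a1 a3 c1 c2 c3.
Proof.
  intro H.
  (* scaling by the common discriminant makes each third entry the product of the other two *)
  set (g := a1 ** a2 ** a3).
  assert (Ea : g ** a3 = (g ** a2) ** (g ** a1)).
  { unfold g. rewrite mulKK, mulKr. apply mulC. }
  assert (Ec : g ** c3 = (g ** c2) ** (g ** c1)).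
  { unfold g. rewrite (rel3_mul _ _ _ _ _ _ H), mulKK, mulKr. apply mulC. }
  apply (rel3_scale g) in H. rewrite Ea, Ec in H. apply rel3_swap12_prod in H.
  rewrite (mulC (g ** a1)), <- Ea, <- Ec in H.
  apply (rel3_scale g) in H. rewrite !mulK in H. exact H.
Qed.

Lemma rel3_swap12r a1 a2 a3 c1 c2 c3 : rel3 a1 a2 a3 c1 c2 c3 -> rel3 a1 a2 a3 c2 c1 c3.
Proof. intro H. apply rel3_sym, rel3_swap12l, rel3_sym, H. Qed.

Lemma rel3_trans_of_swap a1 a2 a3 b1 b2 b3 c1 c2 c3 :
  rel3 a1 a2 a3 b1 b2 b3 -> rel3 b1 b2 b3 c1 c2 c3 -> rel3 a1 a2 a3 c1 c2 c3.
Proof.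
  intros (x & y & z & H1 & H2 & H3) (x' & y' & z' & H1' & H2' & H3').
  assert (K : rel3 z x a1 z' y' c1).
  { exists y, x', b1. split; [|split]; apply rel_swapl, rel_swapr.
    - exact (rel_trans _ _ _ _ _ _ (rel_sym _ _ _ _ H3) H2').
    - exact H1.
    - exact (rel_sym _ _ _ _ H1'). }
  apply rel3_swap12l, rel3_swap23l, rel3_swap12l in K.
  apply rel3_swap12r, rel3_swap23r, rel3_swap12r in K.
  destruct K as (X & Y & Z & K1 & K2 & K3).
  exists X, Y, Z. split; [exact K1 | split].
  - exact (rel_trans _ _ _ _ _ _ H2 K2).
  - exact (rel_trans _ _ _ _ _ _ H3' K3).
Qed.

End TransitivityFromSwap.
End Isometry.

Section SpecialGroup.
Variable G : SGdata.
Hypothesis HG : is_special_group G.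
Local Infix "**" := (sg_mul G) (at level 40, left associativity).
Local Notation rel := (sg_rel G).
Local Notation rel3 := (sg_rel3 G).
Local Notation ng := (sg_neg G).
Local Notation mulA := (sg_assoc G HG).
Local Notation mulxx := (sg_exp2 G HG).
Local Notation rel_refl := (sg_refl G HG).
Local Notation rel_sym := (sg_sym G HG).
Local Notation rel_trans := (sg_trans G HG).
Local Notation rel_swap := (sg_SG1 G HG).
Local Notation swapl := (rel_swapl G rel_trans rel_swap).
Local Notation swapr := (rel_swapr G rel_trans rel_swap).

Lemma sg_mulK a b : a ** (a ** b) = b.
Proof. exact (exp2_mulK _ _ _ mulA (sg_mul1l G HG) mulxx a b). Qed.

Lemma sg_mulC a b : a ** b = b ** a.
Proof. exact (exp2_mulC _ _ _ mulA (sg_mul1l G HG) (sg_mul1r G HG) mulxx a b). Qed.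

Lemma sg_negK a : ng (ng a) = a.
Proof. apply sg_mulK. Qed.

Lemma sg_mulNl a b : ng a ** b = ng (a ** b).
Proof. symmetry; apply mulA. Qed.

Lemma D_G_self a b : D_G G a b a.
Proof. exists b. apply rel_refl. Qed.

Lemma D_G_comm a b c : D_G G a b c -> D_G G b a c.
Proof. intros [d H]. exists d. apply swapr, H. Qed.

Lemma D_G_neg_full a c : D_G G a (ng a) c.
Proof.
  exists (ng c).
  exact (rel_trans _ _ _ _ _ _ (sg_SG2 G HG c) (rel_sym _ _ _ _ (sg_SG2 G HG a))).
Qed.

Lemma D_G_scale g a b c : D_G G a b c -> D_G G (g ** a) (g ** b) (g ** c).
Proof. intros [d H]. exists (g ** d). apply (sg_SG5 G HG), H. Qed.

Lemma D_G_rev1 a b c : D_G G a b c -> D_G G c (ng b) a.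
Proof.
  intros [d H]. exists (ng d).
  apply swapr, (sg_SG4 G HG), swapr, rel_sym, H.
Qed.

Lemma D_G_rev2 a b c : D_G G a b c -> D_G G (ng a) c b.
Proof. intros [d H]. exists (ng d). apply (sg_SG4 G HG), swapl, swapr, rel_sym, H. Qed.

Lemma D_G_negrev a b c : D_G G a b (ng c) -> D_G G b c (ng a).
Proof.
  intros [e H]. exists e.
  apply rel_sym, (sg_SG5 G HG _ _ _ _ (sg_m1 G)) in H. fold (ng a) (ng b) (ng (ng c)) (ng e) in H.
  rewrite sg_negK in H. apply swapr, (sg_SG4 G HG) in H. rewrite !sg_negK in H. exact H.
Qed.

Lemma D_G_assoc a b c t w : D_G G a b t -> D_G G t c w -> exists s, D_G G b c s /\ D_G G a s w.
Proof.
  intros [e He] [f Hf].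
  assert (Habc : rel3 a b c t c e).
  { apply (rel3_swap23r _ rel_sym rel_trans rel_swap).
    exists b, e, c. split; [apply rel_sym, He | split; apply rel_refl]. }
  assert (Htce : rel3 t c e w f e).
  { exists c, f, e. split; [apply rel_sym, Hf | split; apply rel_refl]. }
  destruct (sg_SG6 G HG _ _ _ _ _ _ _ _ _ Habc Htce) as (x & y & z & Hx & Hy & Hz).
  exists x. split; [exists z | exists y]; apply rel_sym; assumption.
Qed.

Lemma sg_rel3_swap12 a b c d : rel3 a b (b ** a) c d (d ** c) -> rel3 b a (a ** b) c d (d ** c).
Proof.
  apply (sg_SG6 G HG). exists a, b, (b ** a). split; [apply rel_swap | split; [|apply rel_refl]].
  rewrite (sg_mulC a b) at 1. apply rel_refl.
Qed.

Lemma M_add_SomeE a b c : M_add G (Some a) (Some b) (Some c) <-> D_G G a b c.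
Proof.
  split.
  - intros [-> | [_ (c' & E & Hc)]]; [apply D_G_comm, D_G_neg_full|].
    injection E as ->. exact Hc.
  - intro Hc. destruct (classic (a = ng b)) as [E | E]; [left; exact E|].
    right. split; [exact E | exists c; split; [reflexivity | exact Hc]].
Qed.

Lemma M_add_Some0E a b : M_add G (Some a) (Some b) None <-> a = ng b.
Proof.
  split; [|left; assumption].
  intros [E | [_ (c & E & _)]]; [exact E | discriminate].
Qed.

Lemma M_add0r x w : M_add G x None w <-> w = x.
Proof. destruct x; reflexivity. Qed.

Lemma M_add_comm x y z : M_add G x y z -> M_add G y x z.
Proof.
  destruct x as [a|], y as [b|]; try (intro H; exact H).
  destruct z as [c|].
  - rewrite !M_add_SomeE. apply D_G_comm.
  - rewrite !M_add_Some0E. intros ->. symmetry. apply sg_negK.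
Qed.

Lemma M_add_assoc_l x y z w :
  (exists t, M_add G x y t /\ M_add G t z w) -> exists t, M_add G y z t /\ M_add G x t w.
Proof.
  intros [t [Hxy Ht]].
  destruct x as [a|]; [|cbn in Hxy; subst t; exists w; split; [exact Ht | reflexivity]].
  destruct y as [b|]; [|cbn in Hxy; subst t; exists z; split; [reflexivity | exact Ht]].
  destruct z as [c|];
    [|apply M_add0r in Ht; subst w; exists (Some b); split; [reflexivity | exact Hxy]].
  destruct t as [t|].
  - apply M_add_SomeE in Hxy. destruct w as [w|].
    + apply M_add_SomeE in Ht.
      destruct (D_G_assoc _ _ _ _ _ Hxy Ht) as (s & Hbc & Has).
      exists (Some s). split; apply M_add_SomeE; assumption.
    + apply M_add_Some0E in Ht. subst t.
      exists (Some (ng a)). split.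
      * apply M_add_SomeE, D_G_negrev, Hxy.
      * apply M_add_Some0E. symmetry. apply sg_negK.
  - apply M_add_Some0E in Hxy. cbn in Ht. subst a w.
    exists (Some b). split; apply M_add_SomeE; [apply D_G_self | apply D_G_comm, D_G_neg_full].
Qed.

Lemma M_add_assoc x y z w :
  (exists t, M_add G x y t /\ M_add G t z w) <-> (exists t, M_add G y z t /\ M_add G x t w).
Proof.
  split; [apply M_add_assoc_l|].
  intros (t & Hyz & Ht).
  destruct (M_add_assoc_l z y x w) as (s & Hyx & Hs).
  - exists t. split; apply M_add_comm; assumption.
  - exists s. split; apply M_add_comm; assumption.
Qed.

Lemma M_add_rev x y z :
  M_add G x y z -> M_add G z (M_neg G y) x /\ M_add G (M_neg G x) z y.
Proof.
  destruct x as [a|].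
  2:{ cbn. intros ->. split; [|reflexivity].
      destruct y as [b|]; [left; symmetry; apply sg_negK | reflexivity]. }
  destruct y as [b|]; [|cbn; intros ->; split; [reflexivity | left; reflexivity]].
  destruct z as [c|].
  - rewrite M_add_SomeE. intro H.
    split; apply M_add_SomeE; [apply D_G_rev1 | apply D_G_rev2]; exact H.
  - rewrite M_add_Some0E. intros ->. cbn. split; [reflexivity | f_equal; symmetry; apply sg_negK].
Qed.

Lemma M_add_mulr x y z w :
  M_add G x y z -> M_add G (M_mul G x w) (M_mul G y w) (M_mul G z w).
Proof.
  destruct w as [d|]; [|destruct x, y, z; reflexivity].
  destruct x as [a|]; [|cbn; intros ->; reflexivity].
  destruct y as [b|]; [|cbn; intros ->; reflexivity].
  destruct z as [c|].
  - cbn [M_mul]. rewrite !M_add_SomeE, !(sg_mulC _ d). apply D_G_scale.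
  - cbn [M_mul]. rewrite !M_add_Some0E. intros ->. apply sg_mulNl.
Qed.

Lemma MG_multiring : is_multiring (MG G).
Proof.
  constructor; cbn.
  - intros [a|] [b|]; [exists (Some a); apply M_add_SomeE, D_G_self | eexists; reflexivity ..].
  - exact M_add_rev.
  - reflexivity.
  - exact M_add_assoc.
  - split; apply M_add_comm.
  - intros [a|] [b|] [c|]; cbn; f_equal; apply mulA.
  - intros [a|] [b|]; cbn; f_equal; apply sg_mulC.
  - intros [a|]; cbn; f_equal; apply (sg_mul1l G HG).
  - intros [a|]; reflexivity.
  - exact M_add_mulr.
Qed.

Lemma M_add_of_sg_rel a b c d : rel a b c d -> M_add G (Some c) (Some d) (Some a).
Proof. intro H. apply M_add_SomeE. exists b. exact H. Qed.

Lemma sg_rel_of_M_add a b c d :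
  a ** b = c ** d -> M_add G (Some c) (Some d) (Some a) -> rel a b c d.
Proof.
  intros E Hc. apply M_add_SomeE in Hc as [e He].
  replace b with e; [exact He|].
  apply (exp2_mulI _ _ _ mulA (sg_mul1l G HG) mulxx a).
  rewrite E. exact (sg_SG3 G HG _ _ _ _ He).
Qed.

Ltac nonzero x Hx := destruct x as [x|]; [clear Hx | now destruct (Hx eq_refl)].

Lemma MG_special : is_special_multifield (MG G).
Proof.
  constructor; cbn [MG mr_car mr_add mr_mul mr_neg mr_zero mr_one].
  - constructor; [exact MG_multiring | discriminate |].
    intros a Ha. nonzero a Ha. exists (Some a). cbn. f_equal. apply mulxx.
  - intros a Ha. nonzero a Ha. cbn. f_equal. apply mulxx.
  - intros a Ha z. nonzero a Ha. left. symmetry. apply sg_negK.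
  - intros a b c d Ha Hb Hc Hd. nonzero a Ha. nonzero b Hb. nonzero c Hc. nonzero d Hd.
    intros [= E] H.
    apply M_add_of_sg_rel with d, rel_sym, sg_rel_of_M_add; assumption.
  - intros a b c d e f Ha Hb Hc Hd He Hf.
    nonzero a Ha. nonzero b Hb. nonzero c Hc. nonzero d Hd. nonzero e He. nonzero f Hf.
    intros [= E1] [= E2] H1 H2.
    apply M_add_of_sg_rel with b, (rel_trans _ _ c d); apply sg_rel_of_M_add; assumption.
  - intros a b c d Ha Hb Hc Hd (x & y & z & Hx & Hy & Hz & Ex & Ea & Ec & Hcy & Hxz & Hyz).
    nonzero a Ha. nonzero b Hb. nonzero c Hc. nonzero d Hd.
    nonzero x Hx. nonzero y Hy. nonzero z Hz.
    injection Ex as Ex. injection Ea as Ea. injection Ec as Ec.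
    assert (Habcd : rel3 a b (b ** a) c d (d ** c)).
    { exists x, y, z. split; [|split]; apply sg_rel_of_M_add; rewrite ?sg_mulK; assumption. }
    destruct (sg_rel3_swap12 _ _ _ _ Habcd) as (t & v & w & Ht & Hat & Hdv).
    pose proof (sg_SG3 G HG _ _ _ _ Hat) as Eb. pose proof (sg_SG3 G HG _ _ _ _ Hdv) as Ec'.
    rewrite sg_mulK in Eb, Ec'.
    exists (Some t), (Some v), (Some w). cbn [M_mul].
    repeat split; try discriminate.
    + apply f_equal, (sg_SG3 G HG _ _ _ _ Ht).
    + apply f_equal, Eb.
    + apply f_equal, Ec'.
    + exact (M_add_of_sg_rel _ _ _ _ Ht).
    + exact (M_add_of_sg_rel _ _ _ _ Hat).
    + exact (M_add_of_sg_rel _ _ _ _ Hdv).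
Qed.

End SpecialGroup.

Lemma M_morph G H (f : sg_car G -> sg_car H) :
  is_special_group G -> is_special_group H -> is_sg_morphism G H f ->
  is_mr_morphism (MG G) (MG H) (Mmap f).
Proof.
  intros HG HH (fmul & fm1 & frel).
  assert (fneg : forall a, f (sg_neg G a) = sg_neg H (f a)).
  { intro a. unfold sg_neg. rewrite fmul, fm1. reflexivity. }
  split; [|split; [|split; [|split]]]; cbn [MG mr_add mr_neg mr_mul mr_zero mr_one].
  - intros [a|] [b|] z Hz; [|cbn in *; subst z; reflexivity ..].
    destruct z as [c|].
    + apply (M_add_SomeE G HG) in Hz as [d Hd].
      apply (M_add_SomeE H HH). exists (f d). apply frel, Hd.
    + apply (M_add_Some0E G) in Hz. apply (M_add_Some0E H). subst a. apply fneg.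
  - intros [a|]; cbn; [rewrite fneg|]; reflexivity.
  - reflexivity.
  - intros [a|] [b|]; cbn; [rewrite fmul|..]; reflexivity.
  - cbn. f_equal. rewrite <- (sg_exp2 H HH (f (sg_one G))), <- fmul, (sg_mul1l G HG). reflexivity.
Qed.

Lemma M_functor : M_is_functor.
Proof.
  split; [|split; [|split]].
  - exact MG_special.
  - exact M_morph.
  - intros A [x|]; reflexivity.
  - intros A B C f g [x|]; reflexivity.
Qed.

Lemma eta_natural : eta_natural_iso.
Proof.
  intros G HG. split.
  - intro HM. split.
    + split; [|split].
      * intros a b. apply nz_ext. reflexivity.
      * apply nz_ext. cbn. f_equal. symmetry. apply (sg_mul1r G HG).
      * intros a b c d Habcd. split; [cbn; rewrite (sg_SG3 G HG _ _ _ _ Habcd); reflexivity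
        | exact (M_add_of_sg_rel G HG _ _ _ _ Habcd)].
    + exists (fun y => match proj1_sig y with Some x => x | None => sg_one G end).
      split; [split; [|split] | split].
      * intros [[a|] Ha] [[b|] Hb]; cbn in *; congruence.
      * apply (sg_mul1r G HG).
      * intros [[a|] Ha] [[b|] Hb] [[c|] Hc] [[d|] Hd]; cbn in *; try congruence.
        intros [[= E] Hc']. apply (sg_rel_of_M_add G HG); assumption.
      * reflexivity.
      * intros [[a|] Ha]; [apply nz_ext; reflexivity | contradiction Ha; reflexivity].
  - intros H f HH Hf Hnz x. apply nz_ext. reflexivity.
Qed.

Section Multiring.
Variable R : MRdata.
Hypothesis HR : is_multiring R.
Local Notation add := (mr_add R).
Local Infix "*" := (mr_mul R).
Local Notation ng := (mr_neg R).
Local Notation z0 := (mr_zero R).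
Local Notation o := (mr_one R).
Local Notation add0 := (mr_add_0 R HR).
Local Notation mulC := (mr_mul_comm R HR).

Lemma mr_add_rev1 x y z : add x y z -> add z (ng y) x.
Proof. apply (mr_add_rev R HR). Qed.

Lemma mr_add_rev2 x y z : add x y z -> add (ng x) z y.
Proof. apply (mr_add_rev R HR). Qed.

Lemma mr_addC x y z : add x y z -> add y x z.
Proof. apply (mr_add_comm R HR). Qed.

Lemma mr_add0l x : add z0 x x.
Proof. apply add0. reflexivity. Qed.

Lemma mr_add0r x : add x z0 x.
Proof. apply mr_addC, mr_add0l. Qed.

Lemma mr_mul0l a : z0 * a = z0.
Proof. rewrite mulC. apply (mr_mul_0 R HR). Qed.

Lemma mr_negK x : ng (ng x) = x.
Proof. symmetry. apply add0, mr_add_rev1, mr_add_rev1, mr_add0l. Qed.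

Lemma mr_neg0 : ng z0 = z0.
Proof. symmetry. apply add0, mr_add_rev1, mr_add0l. Qed.

Lemma mr_add_eq0 x y : add x y z0 -> y = ng x.
Proof. intro H. apply add0, mr_addC, mr_add_rev2, H. Qed.

Lemma mr_mulN1 x : ng o * x = ng x.
Proof.
  apply mr_add_eq0. rewrite <- (mr_mul_1 R HR x) at 1. rewrite <- (mr_mul0l x).
  apply (mr_distr R HR), mr_add_rev1, mr_add0l.
Qed.

Lemma mr_mulN x y : x * ng y = ng (x * y).
Proof.
  rewrite <- (mr_mulN1 y), <- (mr_mulN1 (x * y)), !(mr_mul_assoc R HR), (mulC x). reflexivity.
Qed.

Lemma mr_add_neg x y z : add x y z -> add (ng x) (ng y) (ng z).
Proof.
  intro H. rewrite <- (mr_mulN1 x), <- (mr_mulN1 y), <- (mr_mulN1 z), !(mulC (ng o)).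
  apply (mr_distr R HR), H.
Qed.

End Multiring.

Section SpecialMultifield.
Variable F : MRdata.
Hypothesis HF : is_special_multifield F.
Local Notation add := (mr_add F).
Local Infix "*" := (mr_mul F).
Local Notation ng := (mr_neg F).
Local Notation z0 := (mr_zero F).
Let HM : is_multiring F := mf_multiring F (smf_multifield F HF).
Local Notation mulA := (mr_mul_assoc F HM).
Local Notation mulC := (mr_mul_comm F HM).
Local Notation mul1 := (mr_mul_1 F HM).

Lemma smf_mulK a b : a <> z0 -> a * (a * b) = b.
Proof. intro Ha. rewrite mulA, (smf_i F HF a Ha), mul1. reflexivity. Qed.

Lemma smf_mulKK g a b : g <> z0 -> (g * a) * (g * b) = a * b.
Proof. intro Hg. rewrite <- mulA, (mulC a), <- mulA, smf_mulK by exact Hg. apply mulC. Qed.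

Lemma smf_mul_neq0 a b : a <> z0 -> b <> z0 -> a * b <> z0.
Proof.
  intros Ha Hb E. apply Hb.
  rewrite <- (smf_mulK a b Ha), E. apply (mr_mul_0 F HM).
Qed.

Lemma smf_neg_neq0 a : a <> z0 -> ng a <> z0.
Proof. intros Ha E. apply Ha. rewrite <- (mr_negK F HM a), E. apply mr_neg0, HM. Qed.

Lemma smf_nz_facts : nz_facts F.
Proof.
  pose proof (mf_nontriv F (smf_multifield F HF)) as Hone.
  constructor; [exact Hone | apply smf_neg_neq0, Hone | exact smf_mul_neq0].
Qed.

Lemma smf_add_self a b : a <> z0 -> b <> z0 -> add a b a.
Proof.
  intros Ha Hb. apply (mr_addC F HM).
  rewrite <- (mr_negK F HM a) at 1. apply (mr_add_rev1 F HM), (smf_ii F HF _ Ha).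
Qed.

Lemma smf_mul_exchange a b c d :
  b <> z0 -> c <> z0 -> a * b = c * d -> a * c = b * d.
Proof.
  intros Hb Hc E.
  rewrite <- (smf_mulKK b a c Hb), (mulC b a), E, (mulC b c), smf_mulKK by exact Hc.
  apply mulC.
Qed.

Section Bullet.
Variable HN : nz_facts F.
Local Notation FB := (Fb F HN).
Local Infix "**" := (sg_mul FB) (at level 40, left associativity).
Local Notation rel := (sg_rel FB).

Lemma Fb_mulA a b c : a ** (b ** c) = a ** b ** c.
Proof. apply nz_ext, mulA. Qed.

Lemma Fb_mul1l a : sg_one FB ** a = a.
Proof. apply nz_ext, mul1. Qed.

Lemma Fb_mul1r a : a ** sg_one FB = a.
Proof. apply nz_ext. cbn. rewrite mulC. apply mul1. Qed.

Lemma Fb_mulxx a : a ** a = sg_one FB.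
Proof. apply nz_ext, (smf_i F HF), proj2_sig. Qed.

Lemma Fb_rel_refl a b : rel a b a b.
Proof.
  destruct a as [a Ha], b as [b Hb]. split; [reflexivity | apply smf_add_self; assumption].
Qed.

Lemma Fb_rel_sym a b c d : rel a b c d -> rel c d a b.
Proof.
  destruct a as [a Ha], b as [b Hb], c as [c Hc], d as [d Hd]. intros [E H].
  split; [symmetry; exact E | apply (smf_iii F HF a b c d); assumption].
Qed.

Lemma Fb_rel_trans a b c d e f : rel a b c d -> rel c d e f -> rel a b e f.
Proof.
  destruct a as [a Ha], b as [b Hb], c as [c Hc], d as [d Hd], e as [e He], f as [f Hf].
  intros [E1 H1] [E2 H2].
  split; [exact (eq_trans E1 E2) | apply (smf_iv F HF a b c d e f); assumption].
Qed.

Lemma Fb_SG1 a b : rel a b b a.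
Proof.
  destruct a as [a Ha], b as [b Hb].
  split; [apply mulC | apply (mr_addC F HM), smf_add_self; assumption].
Qed.

Lemma Fb_SG2 a : rel a (sg_neg FB a) (sg_one FB) (sg_m1 FB).
Proof.
  destruct a as [a Ha]. split; cbn.
  - rewrite !(mr_mulN1 F HM), (mr_mulN F HM), (smf_i F HF a Ha), mul1. reflexivity.
  - apply (smf_ii F HF), (mf_nontriv F (smf_multifield F HF)).
Qed.

Lemma Fb_SG3 a b c d : rel a b c d -> a ** b = c ** d.
Proof. intros [E _]. apply nz_ext, E. Qed.

Lemma Fb_SG4 a b c d : rel a b c d -> rel a (sg_neg FB c) (sg_neg FB b) d.
Proof.
  destruct a as [a Ha], b as [b Hb], c as [c Hc], d as [d Hd]. intros [E H]. cbn in *.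
  rewrite !(mr_mulN1 F HM).
  assert (E' : a * ng c = ng b * d).
  { rewrite (mr_mulN F HM), (mulC (ng b)), (mr_mulN F HM), (mulC d).
    f_equal. apply smf_mul_exchange; assumption. }
  assert (Habc : add a (ng c) (ng b)).
  { rewrite <- (mr_negK F HM a).
    apply (mr_add_neg F HM), (mr_add_rev2 F HM), (smf_iii F HF a b c d); assumption. }
  split; [exact E' | apply (smf_iii F HF (ng b) d a (ng c)); auto using smf_neg_neq0, eq_sym].
Qed.

Lemma Fb_SG5 a b c d g : rel a b c d -> rel (g ** a) (g ** b) (g ** c) (g ** d).
Proof.
  destruct g as [g Hg], a as [a Ha], b as [b Hb], c as [c Hc], d as [d Hd]. intros [E H].
  split; cbn; [rewrite !smf_mulKK by exact Hg; exact E|].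
  rewrite !(mulC g). apply (mr_distr F HM), H.
Qed.

Lemma Fb_rel3_swap12 a b c d :
  sg_rel3 FB a b (b ** a) c d (d ** c) -> sg_rel3 FB b a (a ** b) c d (d ** c).
Proof.
  destruct a as [a Ha], b as [b Hb], c as [c Hc], d as [d Hd].
  intros ([x Hx] & [y Hy] & [z Hz] & [Ex Hcy] & [Ea Hxz] & [Ec Hyz]). cbn in *.
  rewrite smf_mulK in Ea, Ec by assumption.
  destruct (smf_v F HF a b c d Ha Hb Hc Hd)
    as (t & v & w & Ht & Hv & Hw & Et & Eb & Ec' & Hcv & Htw & Hvw).
  { exists x, y, z. repeat split; assumption. }
  exists (exist _ t Ht), (exist _ v Hv), (exist _ w Hw). cbn.
  rewrite !smf_mulK by assumption. repeat split; assumption.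
Qed.

Lemma Fb_special : is_special_group FB.
Proof.
  refine (Build_is_special_group FB Fb_mulA Fb_mul1l Fb_mul1r Fb_mulxx Fb_rel_refl Fb_rel_sym
            Fb_rel_trans Fb_SG1 Fb_SG2 Fb_SG3 Fb_SG4 Fb_SG5 _).
  exact (rel3_trans_of_swap FB Fb_rel_sym Fb_rel_trans Fb_SG1 Fb_mulA Fb_mul1l Fb_mul1r
           Fb_mulxx Fb_SG3 (fun g a b c d => Fb_SG5 a b c d g) Fb_rel3_swap12).
Qed.

End Bullet.
End SpecialMultifield.

Lemma smf_morph_neq0 F K (g : mr_car F -> mr_car K) a :
  is_special_multifield F -> is_multifield K -> is_mr_morphism F K g ->
  a <> mr_zero F -> g a <> mr_zero K.
Proof.
  intros HF HK (_ & _ & _ & gmul & g1) Ha E. apply (mf_nontriv K HK).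
  rewrite <- g1, <- (smf_i F HF a Ha), gmul, E.
  apply mr_mul0l, (mf_multiring K HK).
Qed.

Lemma bullet_functor : bullet_is_functor.
Proof.
  split; [|split; [|split]].
  - intros F HF. split; [exact (smf_nz_facts F HF) | exact (Fb_special F HF)].
  - intros F K g HF HK Hg.
    split; [intro a; exact (smf_morph_neq0 F K g a HF (smf_multifield K HK) Hg)|].
    destruct Hg as (gadd & gneg & _ & gmul & g1).
    intros HNF HNK Hnz. split; [|split].
    + intros a b. apply nz_ext, gmul.
    + apply nz_ext. cbn. rewrite gneg, g1. reflexivity.
    + intros [a Ha] [b Hb] [c Hc] [d Hd] [E H]. cbn in *.
      split; [rewrite <- !gmul, E; reflexivity | apply gadd, H].
  - intros F Hnz x. apply nz_ext. reflexivity.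
  - intros. apply nz_ext. reflexivity.
Qed.

Section Counit.
Variable F : MRdata.
Local Notation z0 := (mr_zero F).

Definition eps_inv (a : mr_car F) : option (nzcar F) :=
  match excluded_middle_informative (a = z0) with
  | left _ => None
  | right Ha => Some (exist _ a Ha)
  end.

Lemma eps_inv0 : eps_inv z0 = None.
Proof.
  unfold eps_inv.
  destruct (excluded_middle_informative _) as [_ | N]; [reflexivity | now contradiction N].
Qed.

Lemma eps_inv_nz a (Ha : a <> z0) : eps_inv a = Some (exist _ a Ha).
Proof.
  unfold eps_inv. destruct (excluded_middle_informative _) as [E | Ha']; [contradiction|].
  f_equal. apply nz_ext. reflexivity.
Qed.

Hypothesis HF : is_special_multifield F.
Variable HN : nz_facts F.
Local Notation FB := (Fb F HN).
Let HM : is_multiring F := mf_multiring F (smf_multifield F HF).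

Lemma eps_morph : is_mr_morphism (MG FB) F (eps F).
Proof.
  split; [|split; [|split; [|split]]].
  - intros x y z H. change (M_add FB x y z) in H.
    destruct x as [[a Ha]|]; [|cbn in H; subst z; apply mr_add0l, HM].
    destruct y as [[b Hb]|]; [|cbn in H; subst z; apply mr_add0r, HM].
    destruct z as [[c Hc]|].
    + apply (M_add_SomeE FB (Fb_special F HF HN)) in H as [d [_ H]]. exact H.
    + apply (M_add_Some0E FB) in H. injection H as ->. cbn.
      rewrite (mr_mulN1 F HM). apply (mr_addC F HM), (smf_ii F HF _ Hb).
  - intros [[a Ha]|]; cbn; [apply (mr_mulN1 F HM) | symmetry; apply mr_neg0, HM].
  - reflexivity.
  - intros [[a Ha]|] [[b Hb]|]; cbn; try reflexivity; symmetry;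
      [apply (mr_mul_0 F HM) | apply mr_mul0l, HM ..].
  - reflexivity.
Qed.

Lemma eps_inv_morph : is_mr_morphism F (MG FB) eps_inv.
Proof.
  split; [|split; [|split; [|split]]]; cbn [MG mr_add mr_neg mr_mul mr_zero mr_one].
  - intros a b c H.
    destruct (classic (a = z0)) as [-> | Ha].
    { apply (mr_add_0 F HM) in H as ->. rewrite eps_inv0. reflexivity. }
    destruct (classic (b = z0)) as [-> | Hb].
    { apply (mr_addC F HM), (mr_add_0 F HM) in H as ->.
      rewrite eps_inv0. apply M_add0r. reflexivity. }
    rewrite (eps_inv_nz a Ha), (eps_inv_nz b Hb).
    destruct (classic (c = z0)) as [-> | Hc].
    + rewrite eps_inv0. apply M_add_Some0E, nz_ext. cbn.
      rewrite (mr_add_eq0 F HM a b H), (mr_mulN1 F HM), (mr_negK F HM). reflexivity.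
    + rewrite (eps_inv_nz c Hc). apply (M_add_SomeE FB (Fb_special F HF HN)).
      exists (exist (fun x => x <> z0) _ (smf_mul_neq0 F HF _ _ Hc (smf_mul_neq0 F HF _ _ Ha Hb))).
      split; [apply (smf_mulK F HF _ _ Hc) | exact H].
  - intro a. destruct (classic (a = z0)) as [-> | Ha].
    + rewrite (mr_neg0 F HM), eps_inv0. reflexivity.
    + rewrite (eps_inv_nz _ (smf_neg_neq0 F HF a Ha)), (eps_inv_nz a Ha).
      cbn. f_equal. apply nz_ext. symmetry. apply (mr_mulN1 F HM).
  - exact eps_inv0.
  - intros a b. destruct (classic (a = z0)) as [-> | Ha].
    { rewrite (mr_mul0l F HM), eps_inv0. reflexivity. }
    destruct (classic (b = z0)) as [-> | Hb].
    { rewrite (mr_mul_0 F HM), eps_inv0, (eps_inv_nz a Ha). reflexivity. }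
    rewrite (eps_inv_nz _ (smf_mul_neq0 F HF a b Ha Hb)), (eps_inv_nz a Ha), (eps_inv_nz b Hb).
    cbn. f_equal. apply nz_ext. reflexivity.
  - rewrite (eps_inv_nz _ (mf_nontriv F (smf_multifield F HF))). f_equal. apply nz_ext. reflexivity.
Qed.

End Counit.

Lemma eps_natural : eps_natural_iso.
Proof.
  intros F HF. split.
  - intro HN. split; [exact (eps_morph F HF HN)|].
    exists (eps_inv F). split; [exact (eps_inv_morph F HF HN) | split].
    + intros [[a Ha]|]; [apply eps_inv_nz | apply eps_inv0].
    + intro a. destruct (classic (a = mr_zero F)) as [-> | Ha].
      * rewrite eps_inv0. reflexivity.
      * rewrite (eps_inv_nz F a Ha). reflexivity.
  - intros K g HK (_ & _ & g0 & _) Hnz [x|]; [reflexivity | exact g0].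
Qed.

Theorem theorem5p12 :
  M_is_functor /\ bullet_is_functor /\ eta_natural_iso /\ eps_natural_iso.
Proof.
  exact (conj M_functor (conj bullet_functor (conj eta_natural eps_natural))).
Qed.
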